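(* Assume $f:\mathbb{R}^n\to\mathbb{R}$ is convex with bounded level sets, and there exist $M_1,M_2>0$ such that $\|v\|\le M_1\|x\|+M_2$ for all $x\in\mathbb{R}^n$ and all $v\in\partial f(x)$. Let $\gamma_k,\delta_k,s_k>0$ for all $k$. Let $B>0$ be such that $\|x^*\|\le B$ and $\|v\|\le B$ for all $x^*\in X^*$ and all $v\in\partial f(x^* )$, and let $\rho\in[0,1]$ be arbitrary. Then the iterates of the random incremental penalty method surely satisfy, for all $x^*\in X^*$ and $k\ge1$, $$\begin{aligned}\|x_{k+1}-x^*\|^2\le{}&(1+4s_k^2M_1^2)\|x_k-x^*\|^2+2s_k\big((1-\rho)B+\rho(M_1B+M_2)\big)\mathrm{dist}(x_k,X)\\&+2s_k\rho\big(f^*-f(\Pi_X[x_k])\big)+2s_k\rho M_1\|x_k-x^*\|\,\mathrm{dist}(x_k,X)\\&+\frac{s_k\gamma_k\delta_k}{2\alpha_{\min}}-2s_k\gamma_k\,\mathrm{dist}(x_k,X_{i_k})+4s_k^2\big(M_1^2B^2+M_2^2+\gamma_k^2\big).\end{aligned}$$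
   Context: Let $a_1,\dots,a_m\in\mathbb{R}^n$ be nonzero vectors and $b_1,\dots,b_m\in\mathbb{R}$; $X_i=\{x:\langle a_i,x\rangle-b_i\le0\}$, $X=\bigcap_{i=1}^mX_i$ (assumed nonempty), $\alpha_{\min}=\min_i\|a_i\|$; $\Pi_X$ is the Euclidean projection onto $X$. $X^*$ and $f^*$ are the solution set and optimal value of $\min_{x\in X}f(x)$. For $\delta>0$, nonzero $a$ and scalar $b$: $h_\delta(x;a,b)=\frac{\langle a,x\rangle-b}{\|a\|}$ if $\langle a,x\rangle-b>\delta$, $\frac{(\langle a,x\rangle-b+\delta)^2}{4\delta\|a\|}$ if $-\delta\le\langle a,x\rangle-b\le\delta$, $0$ if $\langle a,x\rangle-b<-\delta$; its gradient is $\nabla h_\delta(x;a,b)=\frac{1}{\|a\|}p'_\delta(\langle a,x\rangle-b)\,a$ with $p'_\delta(s)=1$ for $s>\delta$, $\frac{s+\delta}{2\delta}$ for $|s|\le\delta$, $0$ for $s<-\delta$. Random incremental penalty method: from an initial point $x_1$, for $k\ge1$, $x_{k+1}=x_k-s_k\big[\tilde\nabla f(x_k)+\gamma_k\nabla h_{\delta_k}(x_k;a_{i_k},b_{i_k})\big]$, where $\tilde\nabla f(x_k)\in\partial f(x_k)$ and $i_k\in\{1,\dots,m\}$ is chosen uniformly at random. *)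

From HB Require Import structures.
From mathcomp Require Import all_boot all_order all_algebra.
From mathcomp Require Import boolp classical_sets reals.
Set Implicit Arguments. Unset Strict Implicit. Unset Printing Implicit Defensive.
Import Order.TTheory GRing.Theory Num.Theory.
Local Open Scope ring_scope.
Local Open Scope classical_set_scope.

Section Defs.
Variables (R : realType) (n : nat).
Notation vec := 'rV[R]_n.

Definition dot (x y : vec) : R := \sum_(j < n) x ord0 j * y ord0 j.
Definition vnorm (x : vec) : R := Num.sqrt (dot x x).

Definition convex_fun (f : vec -> R) : Prop :=
  forall (x y : vec) (t : R), 0 <= t -> t <= 1 ->
    f (t *: x + (1 - t) *: y) <= t * f x + (1 - t) * f y.

Definition bounded_level_sets (f : vec -> R) : Prop :=
  forall c : R, exists r : R, forall x, f x <= c -> vnorm x <= r.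

Definition subdiff (f : vec -> R) (x : vec) : set vec :=
  [set v | forall y, f x + dot v (y - x) <= f y].

Definition dist (x : vec) (S : set vec) : R := inf [set vnorm (x - y) | y in S].

(* Euclidean projection onto S (a nearest point of S; unique for closed convex S) *)
Definition proj (S : set vec) (x : vec) : vec :=
  xget 0 [set p | S p /\ forall y, S y -> vnorm (x - p) <= vnorm (x - y)].

Definition halfspace (a : vec) (b : R) : set vec := [set x | dot a x - b <= 0].
Definition polyhedron (m : nat) (a : 'I_m -> vec) (b : 'I_m -> R) : set vec :=
  [set x | forall i, halfspace (a i) (b i) x].
Definition alpha_min (m : nat) (a : 'I_m -> vec) : R :=
  inf [set vnorm (a i) | i in [set: 'I_m]].

Definition fstar (f : vec -> R) (X : set vec) : R := inf [set f x | x in X].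
Definition Xstar (f : vec -> R) (X : set vec) : set vec :=
  [set x | X x /\ f x = fstar f X].

(* derivative of the smoothed penalty and gradient of h_delta *)
Definition pdelta' (delta s : R) : R :=
  if delta < s then 1 else if s < - delta then 0 else (s + delta) / (2 * delta).
Definition grad_h (delta : R) (a : vec) (b : R) (x : vec) : vec :=
  ((vnorm a)^-1 * pdelta' delta (dot a x - b)) *: a.

End Defs.

From HB Require Import structures.
From mathcomp Require Import all_boot all_order all_algebra.
From mathcomp Require Import boolp classical_sets reals.
From mathcomp Require Import ring lra.
Import Order.TTheory GRing.Theory Num.Theory.
Local Open Scope ring_scope.
Local Open Scope classical_set_scope.
Set Implicit Arguments. Unset Strict Implicit. Unset Printing Implicit Defensive.

(** Expand [|x_{k+1} - x*|^2 = |x_k - x*|^2 - 2 s_k <g_k + gamma_k grad h, x_k - x*>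
    + s_k^2 |g_k + gamma_k grad h|^2] and bound the three pieces.  The subgradient
    inequality gives [<g_k, x_k - x*> >= f(x_k) - f*], and [f(x_k) - f*] is bounded below
    in two ways through the projection [p = Pi_X x_k]: by [- B dist(x_k, X)], since the
    directional derivative of [f] at the minimizer [x*] is nonnegative towards [p] and is
    attained by a subgradient at [x*]; and by [f(p) - f* - |u| dist(x_k, X)] for a
    subgradient [u] at [p], where [|p| <= |x_k - x*| + B] by nonexpansiveness of [Pi_X].
    The statement uses the [rho]-mixture of the two.  The penalty gradient differs from
    the exact distance [dist(x_k, X_i)] by at most the smoothing error [delta_k / 4]
    divided by [|a_i|], and the norm of the step is controlled by the growth of
    subgradients.  Subgradients exist by a finite-dimensional Hahn-Banach argument, and
    the projection onto the polyhedron exists since a minimizing sequence is Cauchy by the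
    parallelogram law. *)

(** * Euclidean geometry of row vectors *)

Section Euclid.
Variables (R : realType) (n : nat).
Notation vec := 'rV[R]_n.
Implicit Types (x y z : vec) (t : R).

Lemma dotC x y : dot x y = dot y x.
Proof. by apply: eq_bigr => j _; rewrite mulrC. Qed.

Lemma dotDl x y z : dot (x + y) z = dot x z + dot y z.
Proof. by rewrite /dot -big_split; apply: eq_bigr => j _; rewrite mxE mulrDl. Qed.

Lemma dotZl t x z : dot (t *: x) z = t * dot x z.
Proof. by rewrite /dot mulr_sumr; apply: eq_bigr => j _; rewrite mxE mulrA. Qed.

Lemma dotNl x z : dot (- x) z = - dot x z.
Proof. by rewrite -scaleN1r dotZl mulN1r. Qed.

Lemma dotBl x y z : dot (x - y) z = dot x z - dot y z.
Proof. by rewrite dotDl dotNl. Qed.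

Lemma dotDr x y z : dot z (x + y) = dot z x + dot z y.
Proof. by rewrite dotC dotDl !(dotC z). Qed.

Lemma dotZr t x z : dot z (t *: x) = t * dot z x.
Proof. by rewrite dotC dotZl dotC. Qed.

Lemma dotNr x z : dot z (- x) = - dot z x.
Proof. by rewrite dotC dotNl dotC. Qed.

Lemma dotBr x y z : dot z (x - y) = dot z x - dot z y.
Proof. by rewrite dotDr dotNr. Qed.

Lemma dot0l z : dot 0 z = 0.
Proof. by rewrite -(scale0r 0) dotZl mul0r. Qed.

Definition dotE := (dotDl, dotDr, dotBl, dotBr, dotNl, dotNr, dotZl, dotZr).

Lemma dotxx_ge0 x : 0 <= dot x x.
Proof. by apply: sumr_ge0 => j _; rewrite -expr2 sqr_ge0. Qed.

Lemma dotxx_eq0 x : (dot x x == 0) = (x == 0).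
Proof.
apply/idP/eqP => [|->]; last by rewrite dot0l.
rewrite psumr_eq0 => [/allP sqr_eq0|j _]; last by rewrite -expr2 sqr_ge0.
apply/rowP => j; have := sqr_eq0 j (mem_index_enum _).
by rewrite mxE /= mulf_eq0 orbb => /eqP.
Qed.

Lemma vnorm_ge0 x : 0 <= vnorm x.
Proof. exact: sqrtr_ge0. Qed.

Lemma vnorm_sqr x : vnorm x ^+ 2 = dot x x.
Proof. by rewrite sqr_sqrtr // dotxx_ge0. Qed.

Lemma vnorm0 : vnorm (0 : vec) = 0.
Proof. by rewrite /vnorm dot0l sqrtr0. Qed.

Lemma vnorm_gt0 x : x != 0 -> 0 < vnorm x.
Proof. by move=> x0; rewrite sqrtr_gt0 lt0r dotxx_eq0 x0 dotxx_ge0. Qed.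

Lemma vnormZ t x : vnorm (t *: x) = `|t| * vnorm x.
Proof. by rewrite /vnorm dotZl dotZr mulrA -expr2 sqrtrM ?sqr_ge0 // sqrtr_sqr. Qed.

Lemma vnormN x : vnorm (- x) = vnorm x.
Proof. by rewrite -scaleN1r vnormZ normrN normr1 mul1r. Qed.

Lemma vnorm_distC x y : vnorm (x - y) = vnorm (y - x).
Proof. by rewrite -vnormN opprB. Qed.

Lemma cauchy_schwarz x y : dot x y <= vnorm x * vnorm y.
Proof.
have [y0|y_neq0] := eqVneq y 0; first by rewrite y0 dotC dot0l vnorm0 mulr0.
have yy_gt0 : 0 < dot y y by rewrite lt0r dotxx_eq0 y_neq0 dotxx_ge0.
have := dotxx_ge0 (dot y y *: x - dot x y *: y); rewrite !dotE (dotC y x) => h.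
have : dot x y ^+ 2 <= (vnorm x * vnorm y) ^+ 2 by rewrite exprMn !vnorm_sqr; nra.
have := mulr_ge0 (vnorm_ge0 x) (vnorm_ge0 y); nra.
Qed.

Lemma ler_vnormD x y : vnorm (x + y) <= vnorm x + vnorm y.
Proof.
have : vnorm (x + y) ^+ 2 <= (vnorm x + vnorm y) ^+ 2.
  by rewrite sqrrD !vnorm_sqr !dotE (dotC y x); have := cauchy_schwarz x y; lra.
by have := addr_ge0 (vnorm_ge0 x) (vnorm_ge0 y); nra.
Qed.

Lemma vnorm_le_distD x y : vnorm x <= vnorm (x - y) + vnorm y.
Proof. by have := ler_vnormD (x - y) y; rewrite subrK. Qed.

Lemma vnorm_parallelogram x y :
  vnorm (x - y) ^+ 2 + vnorm (x + y) ^+ 2 = 2 * vnorm x ^+ 2 + 2 * vnorm y ^+ 2.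
Proof. by rewrite !vnorm_sqr !dotE (dotC y x); ring. Qed.

Lemma vnorm_sqr_subZ x y t :
  vnorm (x - t *: y) ^+ 2 = vnorm x ^+ 2 - 2 * t * dot y x + t ^+ 2 * vnorm y ^+ 2.
Proof. by rewrite !vnorm_sqr !dotE (dotC x y); ring. Qed.

Lemma coord_le_vnorm x c : `|x 0 c| <= vnorm x.
Proof.
have : x 0 c ^+ 2 <= vnorm x ^+ 2.
  rewrite vnorm_sqr /dot (bigD1 c) //= -expr2 lerDl.
  by apply: sumr_ge0 => j _; rewrite -expr2 sqr_ge0.
by rewrite -real_normK ?num_real //; have := vnorm_ge0 x; have := normr_ge0 (x 0 c); nra.
Qed.

Lemma dot_le_coord_bound x y e : (forall c, `|y 0 c| <= e) ->
  dot x y <= e * \sum_c `|x 0 c|.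
Proof.
move=> ye; rewrite /dot mulr_sumr; apply: ler_sum => c _.
by rewrite (le_trans (ler_norm _)) // normrM mulrC ler_wpM2r.
Qed.

Lemma vnorm_le_coord_bound x e : 0 <= e -> (forall c, `|x 0 c| <= e) ->
  vnorm x <= n%:R * e.
Proof.
move=> e_ge0 xe.
have sum_le : \sum_c `|x 0 c| <= n%:R * e.
  by rewrite -[X in X%:R]card_ord mulr_natl -sumr_const; exact: ler_sum.
have n_le : n%:R <= n%:R ^+ 2 :> R.
  by rewrite -natrX ler_nat; case: (n) => // k; rewrite expnS leq_pmulr.
have : vnorm x ^+ 2 <= (n%:R * e) ^+ 2.
  rewrite vnorm_sqr; apply: le_trans (dot_le_coord_bound x xe) _.
  by rewrite exprMn; have := ler_wpM2l e_ge0 sum_le; nra.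
by have := mulr_ge0 (ler0n R n) e_ge0; have := vnorm_ge0 x; nra.
Qed.
End Euclid.

(** * Sublinear functionals and subgradients *)

Section Sublinear.
Variables (R : realType) (n : nat).
Notation vec := 'rV[R]_n.
Implicit Types (q : vec -> R) (d e w x y : vec) (c s t : R).

Definition sublinear q :=
  (forall x y, q (x + y) <= q x + q y) /\ (forall t x, 0 < t -> q (t *: x) <= t * q x).

Definition affine_along q d c := forall y t, q (y + t *: d) = q y + t * c.

Lemma affine_alongP q d c : (forall y t, q (y + t *: d) <= q y + t * c) ->
  affine_along q d c.
Proof.
move=> le_q y t; apply/eqP; rewrite eq_le le_q /=.
have := le_q (y + t *: d) (- t); rewrite -addrA -scalerDl subrr scale0r addr0; lra.
Qed.

Section SublinearTheory.
Variable q : vec -> R.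
Hypothesis q_sub : sublinear q.

Lemma sublinear0 : q 0 = 0.
Proof.
have [qD qZ] := q_sub; have := qD 0 0; have := qZ 2^-1 0 ltac:(lra).
by rewrite addr0 scaler0; lra.
Qed.

Lemma sublinearZ t x : 0 < t -> q (t *: x) = t * q x.
Proof.
have [_ qZ] := q_sub => t_gt0; apply/eqP; rewrite eq_le qZ //=.
have := qZ t^-1 (t *: x) ltac:(by rewrite invr_gt0).
by rewrite scalerA mulVf ?gt_eqF // scale1r -(ler_pM2l t_gt0) mulrA mulfV ?gt_eqF ?mul1r.
Qed.

Lemma sublinear_scale_ge t e : t * q e <= q (t *: e).
Proof.
have [qD _] := q_sub.
have [t_lt0|t_gt0|->] := ltrgtP t 0; last by rewrite mul0r scale0r sublinear0.
- have := qD e (- e); rewrite subrr sublinear0.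
  have -> : t *: e = (- t) *: (- e) by rewrite scalerN scaleNr opprK.
  rewrite sublinearZ ?oppr_gt0 //; nra.
- by rewrite sublinearZ.
Qed.

Section LineExtension.
Variable e : vec.

(* The largest sublinear minorant of [q] that is affine along [e] with slope [q e]. *)
Definition line_ext y := inf [set q (y + t *: e) - t * q e | t in [set: R]].

Lemma line_ext_bounded y t : - q (- y) <= q (y + t *: e) - t * q e.
Proof.
have [qD _] := q_sub; have := qD (y + t *: e) (- y).
by rewrite addrC addKr; have := sublinear_scale_ge t e; lra.
Qed.

Lemma line_ext_le y t : line_ext y <= q (y + t *: e) - t * q e.
Proof.
apply: ge_inf; last by exists t.
by exists (- q (- y)) => _ [s _ <-]; apply: line_ext_bounded.
Qed.

Lemma line_ext_ge y c : (forall t, c <= q (y + t *: e) - t * q e) -> c <= line_ext y.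
Proof.
move=> c_le; apply: lb_le_inf; first by exists (q (y + 0 *: e) - 0 * q e), 0.
by move=> _ [t _ <-].
Qed.

Lemma line_ext_le_self y : line_ext y <= q y.
Proof. by have := line_ext_le y 0; rewrite scale0r addr0 mul0r subr0. Qed.

Lemma line_ext_sublinear : sublinear line_ext.
Proof.
have [qD qZ] := q_sub; split => [x y|t x t_gt0].
  rewrite -lerBlDr; apply: line_ext_ge => t1; rewrite lerBlDl -lerBlDr.
  apply: line_ext_ge => t2; rewrite lerBlDl.
  apply: le_trans (line_ext_le (x + y) (t1 + t2)) _.
  have := qD (x + t1 *: e) (y + t2 *: e).
  by rewrite addrACA -scalerDl; lra.
rewrite mulrC -ler_pdivrMr //; apply: line_ext_ge => s.
rewrite ler_pdivrMr //; apply: le_trans (line_ext_le _ (t * s)) _.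
have := qZ t (x + s *: e) t_gt0; rewrite scalerDr scalerA; nra.
Qed.

Lemma line_ext_affine : affine_along line_ext e (q e).
Proof.
apply: affine_alongP => y s; rewrite -lerBlDr; apply: line_ext_ge => t.
rewrite lerBlDr; apply: le_trans (line_ext_le _ (t - s)) _.
by rewrite -addrA -scalerDl [s + _]addrC subrK; lra.
Qed.

Lemma line_ext_affine_keep d c : affine_along q d c -> affine_along line_ext d c.
Proof.
move=> q_aff; apply: affine_alongP => y s; rewrite -lerBlDr; apply: line_ext_ge => t.
rewrite lerBlDr; apply: le_trans (line_ext_le _ t) _.
by rewrite addrAC q_aff; lra.
Qed.

End LineExtension.
End SublinearTheory.

Lemma affine_basis_linear q (c : 'I_n -> R) : q 0 = 0 ->
  (forall j, affine_along q (delta_mx 0 j) (c j)) -> forall y, q y = dot (\row_j c j) y.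
Proof.
move=> q0 q_aff y.
have q_sum r : q (\sum_(j <- r) y 0 j *: (delta_mx 0 j : vec)) = \sum_(j <- r) y 0 j * c j.
  by elim: r => [|j r IH]; rewrite ?big_nil // !big_cons addrC q_aff IH addrC.
by rewrite {1}(row_sum_delta y) q_sum; apply: eq_bigr => j _; rewrite mxE mulrC.
Qed.

(* Finite-dimensional Hahn-Banach: shrink [q] by [line_ext] along [w] and then along each
   basis vector; the result is affine along every basis vector, hence linear. *)
Lemma sublinear_linear_minorant q w : sublinear q ->
  exists v, (forall y, dot v y <= q y) /\ dot v w = q w.
Proof.
move=> q_sub.
have ext (r : seq 'I_n) : exists p, [/\ sublinear p, forall y, p y <= q y, affine_along p w (q w) &
    exists c : 'I_n -> R, forall j, j \in r -> affine_along p (delta_mx 0 j) (c j)].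
  elim: r => [|j r [p [p_sub p_le p_aff [c c_aff]]]].
    exists (line_ext q w); split; [exact: line_ext_sublinear | exact: line_ext_le_self |
      exact: line_ext_affine | by exists (fun=> 0)].
  exists (line_ext p (delta_mx 0 j)); split.
  - exact: line_ext_sublinear.
  - by move=> y; apply: le_trans (p_le y); apply: line_ext_le_self.
  - exact: line_ext_affine_keep.
  exists (fun i => if i == j then p (delta_mx 0 j) else c i) => i; rewrite inE.
  case: eqP => [-> _|_ /= ir]; first exact: line_ext_affine.
  by apply: line_ext_affine_keep => //; apply: c_aff.
have [p [p_sub p_le p_aff [c c_aff]]] := ext (enum 'I_n).
have p_lin := affine_basis_linear (sublinear0 p_sub) (fun j => c_aff j (mem_enum _ j)).
exists (\row_j c j); split => [y|]; first by rewrite -p_lin.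
by rewrite -p_lin; have := p_aff 0 1; rewrite add0r scale1r sublinear0 // add0r mul1r.
Qed.

End Sublinear.

Section DirectionalDerivative.
Variables (R : realType) (n : nat).
Notation vec := 'rV[R]_n.
Implicit Types (u v w y z : vec) (c s t : R).
Variable f : vec -> R.
Hypothesis f_conv : convex_fun f.

Definition diff_quot z w t := (f (z + t *: w) - f z) / t.
Definition dir_deriv z w := inf [set diff_quot z w t | t in [set t | 0 < t]].

Lemma diff_quot_le z w s t : 0 < s -> s <= t -> diff_quot z w s <= diff_quot z w t.
Proof.
move=> s_gt0 s_le_t; have t_gt0 := lt_le_trans s_gt0 s_le_t.
have st_ge0 : 0 <= s / t by rewrite divr_ge0 // ltW.
have st_le1 : s / t <= 1 by rewrite ler_pdivrMr // mul1r.
have := f_conv (z + t *: w) z st_ge0 st_le1.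
have -> : s / t *: (z + t *: w) + (1 - s / t) *: z = z + s *: w.
  by rewrite scalerDr scalerA divfK ?gt_eqF // addrAC -scalerDl addrCA subrr addr0 scale1r.
rewrite /diff_quot ler_pdivrMr // => f_le.
have -> : (f (z + t *: w) - f z) / t * s = s / t * (f (z + t *: w) - f z) by ring.
lra.
Qed.

Lemma diff_quot_ge z w t : 0 < t -> f z - f (z - w) <= diff_quot z w t.
Proof.
move=> t_gt0; have t1_gt0 : 0 < 1 + t by lra.
have inv_ge0 : 0 <= (1 + t)^-1 by rewrite invr_ge0 ltW.
have inv_le1 : (1 + t)^-1 <= 1 by rewrite invf_le1 //; lra.
have := f_conv (z + t *: w) (z - w) inv_ge0 inv_le1.
have -> : (1 + t)^-1 *: (z + t *: w) + (1 - (1 + t)^-1) *: (z - w) = z.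
  by apply/rowP => j; rewrite !mxE; field; lra.
rewrite /diff_quot ler_pdivlMr // => /(ler_wpM2l (ltW t1_gt0)).
have -> : 1 - (1 + t)^-1 = t / (1 + t) by field; lra.
have -> : (1 + t) * ((1 + t)^-1 * f (z + t *: w) + t / (1 + t) * f (z - w))
  = f (z + t *: w) + t * f (z - w) by field; lra.
lra.
Qed.

Lemma dir_deriv_le z w t : 0 < t -> dir_deriv z w <= diff_quot z w t.
Proof.
move=> t_gt0; apply: ge_inf; last by exists t.
by exists (f z - f (z - w)) => _ [s s_gt0 <-]; apply: diff_quot_ge.
Qed.

Lemma dir_deriv_ge z w c : (forall t, 0 < t -> c <= diff_quot z w t) -> c <= dir_deriv z w.
Proof.
move=> c_le; apply: lb_le_inf; first by exists (diff_quot z w 1), 1 => //=.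
by move=> _ [t t_gt0 <-]; apply: c_le.
Qed.

Lemma dir_deriv_le_diff z w : dir_deriv z w <= f (z + w) - f z.
Proof. by have := dir_deriv_le z w ltr01; rewrite /diff_quot scale1r divr1. Qed.

Lemma diff_quotD_le z u v t : 0 < t ->
  diff_quot z (u + v) t <= diff_quot z u (2 * t) + diff_quot z v (2 * t).
Proof.
move=> t_gt0; have := f_conv (z + (2 * t) *: u) (z + (2 * t) *: v)
  (ltac:(lra) : 0 <= 2^-1 :> R) (ltac:(lra) : 2^-1 <= 1 :> R).
have -> : 2^-1 *: (z + (2 * t) *: u) + (1 - 2^-1) *: (z + (2 * t) *: v) = z + t *: (u + v).
  by apply/rowP => j; rewrite !mxE; field.
rewrite /diff_quot -mulrDl invfM mulrA ler_pM2r ?invr_gt0 //; lra.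
Qed.

Lemma diff_quotZ z w s t : 0 < s -> 0 < t -> diff_quot z (s *: w) t = s * diff_quot z w (t * s).
Proof. by move=> s_gt0 t_gt0; rewrite /diff_quot scalerA; field; rewrite !gt_eqF. Qed.

Lemma dir_deriv_sublinear z : sublinear (dir_deriv z).
Proof.
split=> [u v|s w s_gt0].
  rewrite -lerBlDr; apply: dir_deriv_ge => t1 t1_gt0; rewrite lerBlDl -lerBlDr.
  apply: dir_deriv_ge => t2 t2_gt0; rewrite lerBlDl.
  have t_gt0 : 0 < Num.min t1 t2 / 2 by rewrite divr_gt0 // lt_min t1_gt0.
  apply: le_trans (dir_deriv_le _ _ t_gt0) _; apply: le_trans (diff_quotD_le _ _ _ t_gt0) _.
  have m_gt0 : 0 < Num.min t1 t2 by rewrite lt_min t1_gt0.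
  rewrite mulrC divfK ?pnatr_eq0 //.
  by apply: lerD; apply: diff_quot_le; rewrite // ge_min lexx ?orbT.
rewrite mulrC -ler_pdivrMr //; apply: dir_deriv_ge => t t_gt0.
have ts_gt0 : 0 < t / s by rewrite divr_gt0.
rewrite ler_pdivrMr //; apply: le_trans (dir_deriv_le _ _ ts_gt0) _.
by rewrite diff_quotZ // divfK ?gt_eqF // mulrC.
Qed.

Lemma exists_subgradient_dir z w : exists v, subdiff f z v /\ dir_deriv z w <= dot v w.
Proof.
have [v [v_le v_w]] := sublinear_linear_minorant w (dir_deriv_sublinear z).
exists v; split => [y|]; last by rewrite v_w.
have := le_trans (v_le (y - z)) (dir_deriv_le_diff z (y - z)).
by rewrite [z + _]addrC subrK; lra.
Qed.

Lemma exists_subgradient z : exists v, subdiff f z v.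
Proof. by have [v [v_sub _]] := exists_subgradient_dir z 0; exists v. Qed.

Lemma convex_bounded_below : bounded_level_sets f -> exists L, forall y, L <= f y.
Proof.
move=> f_lev; have [v v_sub] := exists_subgradient 0; have [r r_le] := f_lev (f 0).
exists (f 0 - vnorm v * r) => y.
have vr_ge0 : 0 <= vnorm v * r.
  by have := r_le 0 (lexx _); rewrite vnorm0 => /(mulr_ge0 (vnorm_ge0 v)).
have [fy_le|] := lerP (f y) (f 0); last by lra.
have := v_sub y; rewrite subr0.
have := cauchy_schwarz (- v) y; rewrite dotNl vnormN.
have := ler_wpM2l (vnorm_ge0 v) (r_le y fy_le); lra.
Qed.

End DirectionalDerivative.

(** * Projection onto a polyhedron *)

Lemma le0_if_le_div_succ (R : realType) (z K : R) :
  (forall j : nat, z <= K / j.+1%:R) -> z <= 0.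
Proof.
move=> z_le; rewrite leNgt; apply/negP => z_gt0.
have K_gt0 : 0 < K by have := z_le 0%N; rewrite divr1; lra.
have [j] := ltr_add_invr (divr_gt0 z_gt0 K_gt0).
by rewrite add0r ltr_pdivlMr // mulrC => /(le_lt_trans (z_le j)); rewrite ltxx.
Qed.

Lemma rate_limit (R : realType) (y r : nat -> R) :
  (forall i j, `|y i - y j| <= r i + r j) -> exists p, forall j, `|p - y j| <= r j.
Proof.
move=> y_close; exists (sup [set y i - r i | i in [set: nat]]) => j.
have ub : ubound [set y i - r i | i in [set: nat]] (y j + r j).
  by move=> _ [i _ <-]; have := y_close i j; rewrite ler_norml; lra.
have := ge_sup (ex_intro _ (y j - r j) (ex_intro2 _ _ j I erefl)) ub.
have := ub_le_sup (ex_intro _ _ ub) (ex_intro2 _ _ j I erefl).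
by rewrite ler_norml; lra.
Qed.

Section Distance.
Variables (R : realType) (n : nat).
Notation vec := 'rV[R]_n.
Implicit Types (X : set vec) (x y z p : vec) (e : R).

Definition convex_set X := forall y z (t : R), X y -> X z -> 0 <= t -> t <= 1 ->
  X ((1 - t) *: y + t *: z).

Lemma dist_le X x y : X y -> dist x X <= vnorm (x - y).
Proof.
move=> Xy; apply: ge_inf; last by exists y.
by exists 0 => _ [z _ <-]; apply: vnorm_ge0.
Qed.

Lemma dist_ge X x e : X !=set0 -> (forall y, X y -> e <= vnorm (x - y)) -> e <= dist x X.
Proof.
move=> [y Xy] e_le; apply: lb_le_inf; first by exists (vnorm (x - y)), y.
by move=> _ [z Xz <-]; apply: e_le.
Qed.

Lemma dist_ge0 X x : X !=set0 -> 0 <= dist x X.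
Proof. by move=> Xne; apply: dist_ge => // y _; apply: vnorm_ge0. Qed.

Lemma exists_near_point X x e : X !=set0 -> 0 < e ->
  exists2 y, X y & vnorm (x - y) ^+ 2 < dist x X ^+ 2 + e.
Proof.
move=> Xne e_gt0; have d_ge0 := dist_ge0 x Xne.
have De_gt0 : 0 < dist x X ^+ 2 + e by rewrite ltr_wpDl ?sqr_ge0.
have : inf [set vnorm (x - y) | y in X] < Num.sqrt (dist x X ^+ 2 + e).
  by rewrite -[X in X < _]ger0_norm // -sqrtr_sqr ltr_sqrt // ltrDl.
case/inf_lt => [|_ [y Xy <-] y_lt]; first by case: Xne => y Xy; exists (vnorm (x - y)), y.
exists y => //; rewrite -(sqr_sqrtr (ltW De_gt0)).
by have := vnorm_ge0 (x - y); nra.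
Qed.

(* Parallelogram law applied at the midpoint [(y + z) / 2] of [X]. *)
Lemma convex_near_points_close X x y z e1 e2 : convex_set X -> X y -> X z ->
  vnorm (x - y) ^+ 2 <= dist x X ^+ 2 + e1 -> vnorm (x - z) ^+ 2 <= dist x X ^+ 2 + e2 ->
  vnorm (y - z) ^+ 2 <= 2 * (e1 + e2).
Proof.
move=> X_conv Xy Xz y_near z_near.
have Xm := X_conv y z 2^-1 Xy Xz ltac:(lra) ltac:(lra).
have m_far := dist_le x Xm; have := dist_ge0 x (ex_intro _ y Xy).
have := vnorm_parallelogram (x - z) (x - y).
have -> : x - z - (x - y) = y - z by apply/rowP => j; rewrite !mxE; ring.
have -> : x - z + (x - y) = 2 *: (x - ((1 - 2^-1) *: y + 2^-1 *: z)).
  by apply/rowP => j; rewrite !mxE; field.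
rewrite vnormZ ger0_norm // exprMn.
have := vnorm_ge0 (x - ((1 - 2^-1) *: y + 2^-1 *: z)); nra.
Qed.

Lemma halfspace_closed a b (Y : nat -> vec) p :
  (forall j, halfspace a b (Y j)) -> (forall j c, `|p 0 c - Y j 0 c| <= j.+1%:R^-1) ->
  halfspace a b p.
Proof.
move=> Y_in p_near; apply: (@le0_if_le_div_succ _ _ (\sum_c `|a 0 c|)) => j.
have near_j c : `|(p - Y j) 0 c| <= j.+1%:R^-1 by rewrite !mxE; apply: p_near.
have := dot_le_coord_bound a near_j; rewrite dotBr mulrC.
by have := Y_in j; rewrite /halfspace /=; move: (_ / _) => K; lra.
Qed.

Lemma polyhedron_convex m (a : 'I_m -> vec) b : convex_set (polyhedron a b).
Proof.
move=> y z t Xy Xz t_ge0 t_le1 i; have := Xy i; have := Xz i; rewrite /halfspace /=.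
rewrite dotDr !dotZr => zi yi.
have t'_ge0 : 0 <= 1 - t by lra.
have := mulr_ge0_le0 t_ge0 zi; have := mulr_ge0_le0 t'_ge0 yi; lra.
Qed.
End Distance.

Lemma polyhedron_nearest_point (R : realType) (n m : nat) (a : 'I_m -> 'rV[R]_n) b x :
  polyhedron a b !=set0 ->
  exists2 p, polyhedron a b p & vnorm (x - p) <= dist x (polyhedron a b).
Proof.
set X := polyhedron a b => Xne; have X_conv : convex_set X := @polyhedron_convex _ _ _ a b.
pose r (j : nat) : R := j.+1%:R^-1.
have r_gt0 j : 0 < r j by rewrite invr_gt0.
have /choice [Y Y_near] j : exists y, X y /\ vnorm (x - y) ^+ 2 < dist x X ^+ 2 + r j ^+ 2 / 4.
  have [|y Xy y_lt] := exists_near_point x Xne (e := r j ^+ 2 / 4); last by exists y.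
  by rewrite divr_gt0 ?exprn_gt0.
have Y_close i j c : `|Y i 0 c - Y j 0 c| <= r i + r j.
  have [[Xi near_i] [Xj near_j]] := (Y_near i, Y_near j).
  have := convex_near_points_close X_conv Xi Xj (ltW near_i) (ltW near_j).
  have := coord_le_vnorm (Y i - Y j) c; rewrite !mxE.
  have := r_gt0 i; have := r_gt0 j; have := vnorm_ge0 (Y i - Y j); nra.
have /choice [q q_lim] c : exists qc, forall j, `|qc - Y j 0 c| <= r j.
  by apply: rate_limit => i j; apply: Y_close.
pose p := \row_c q c.
have p_near j c : `|p 0 c - Y j 0 c| <= r j by rewrite mxE.
have Xp : X p by move=> i; apply: halfspace_closed p_near => j; apply: (Y_near j).1.
exists p => //; rewrite -subr_le0; apply: (@le0_if_le_div_succ _ _ (1 + n%:R)) => j.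
have Yj_le : vnorm (x - Y j) <= dist x X + r j.
  have := (Y_near j).2; have := r_gt0 j; have := dist_ge0 x Xne.
  have := vnorm_ge0 (x - Y j); nra.
have p_le : vnorm (Y j - p) <= n%:R * r j.
  apply: vnorm_le_coord_bound (ltW (r_gt0 j)) _ => c.
  by rewrite !mxE distrC; apply: q_lim.
have := ler_vnormD (x - Y j) (Y j - p); rewrite addrA subrK -/(r j).
by move: (r j) Yj_le p_le => rj; lra.
Qed.

Section Projection.
Variables (R : realType) (n : nat).
Notation vec := 'rV[R]_n.
Implicit Types (x y : vec).
Variable X : set vec.
Hypothesis X_conv : convex_set X.
Hypothesis X_nearest : forall x, exists2 p, X p & vnorm (x - p) <= dist x X.

Lemma proj_spec x : X (proj X x) /\ forall y, X y -> vnorm (x - proj X x) <= vnorm (x - y).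
Proof.
have [p Xp p_le] := X_nearest x.
apply: (xgetPex 0 (P := [set p | X p /\ forall y, X y -> vnorm (x - p) <= vnorm (x - y)])).
by exists p; split=> // y Xy; apply: le_trans p_le (dist_le x Xy).
Qed.

Lemma proj_mem x : X (proj X x).
Proof. exact: (proj_spec x).1. Qed.

Lemma proj_dist x : vnorm (x - proj X x) = dist x X.
Proof.
apply/eqP; rewrite eq_le (dist_le _ (proj_mem x)) andbT.
by apply: dist_ge => [|y]; [exists (proj X x); apply: proj_mem | apply: (proj_spec x).2].
Qed.

Lemma proj_variational x y : X y -> dot (x - proj X x) (y - proj X x) <= 0.
Proof.
move=> Xy; set p := proj X x.
apply: (@le0_if_le_div_succ _ _ (vnorm (y - p) ^+ 2 / 2)) => j.
have t_gt0 : 0 < j.+1%:R^-1 :> R by rewrite invr_gt0.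
have t_le1 : j.+1%:R^-1 <= 1 :> R by rewrite invf_le1 // ler1n.
have := (proj_spec x).2 _ (X_conv (proj_mem x) Xy (ltW t_gt0) t_le1).
have -> : x - ((1 - j.+1%:R^-1) *: p + j.+1%:R^-1 *: y) = (x - p) - j.+1%:R^-1 *: (y - p).
  by apply/rowP => c; rewrite !mxE; ring.
move=> /(lerXn2r 2 (vnorm_ge0 _) (vnorm_ge0 _)) /=.
rewrite vnorm_sqr_subZ (dotC (y - p)).
move: (j.+1%:R^-1) t_gt0 => t t_gt0; nra.
Qed.

Lemma proj_nonexpansive x y : X y -> vnorm (proj X x - y) <= vnorm (x - y).
Proof.
move=> Xy; have := proj_variational x Xy; set p := proj X x => var_le.
have : vnorm (p - y) ^+ 2 <= vnorm (x - y) ^+ 2.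
  have -> : x - y = (x - p) - (-1) *: (p - y) by rewrite scaleN1r opprK addrA subrK.
  rewrite vnorm_sqr_subZ -[p - y]opprB dotNl (dotC (y - p)) vnormN.
  by have := vnorm_ge0 (x - p); nra.
by have := vnorm_ge0 (p - y); have := vnorm_ge0 (x - y); nra.
Qed.
End Projection.

(** * The smoothed penalty *)

Section Penalty.
Variables (R : realType) (n : nat).
Notation vec := 'rV[R]_n.
Implicit Types (a x y : vec) (b delta r : R).

Lemma alpha_min_le m (a : 'I_m -> vec) i : alpha_min a <= vnorm (a i).
Proof. by apply: ge_inf; [exists 0 => _ [j _ <-]; apply: vnorm_ge0 | exists i]. Qed.

Lemma alpha_min_gt0 m (a : 'I_m -> vec) : (0 < m)%N -> (forall i, a i != 0) ->
  0 < alpha_min a.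
Proof.
move=> m_gt0 a_neq0; have a_gt0 i : 0 < vnorm (a i) := vnorm_gt0 (a_neq0 i).
pose S := \sum_i (vnorm (a i))^-1.
have S_ge i : (vnorm (a i))^-1 <= S.
  rewrite /S (bigD1 i) //= lerDl; apply: sumr_ge0 => j _.
  by rewrite invr_ge0 ltW.
have S_gt0 : 0 < S by apply: lt_le_trans (S_ge (Ordinal m_gt0)); rewrite invr_gt0.
apply: (@lt_le_trans _ _ S^-1); first by rewrite invr_gt0.
apply: lb_le_inf; first by exists (vnorm (a (Ordinal m_gt0))), (Ordinal m_gt0).
by move=> _ [i _ <-]; rewrite -[leRHS]invrK lef_pV2 ?posrE ?invr_gt0.
Qed.

Lemma pdelta'_bounds delta r : 0 < delta ->
  [/\ 0 <= pdelta' delta r, pdelta' delta r <= 1 &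
      Num.max 0 r - pdelta' delta r * r <= delta / 4].
Proof.
move=> delta_gt0; rewrite /pdelta'.
case: ltP => [r_gt|r_le].
  by split; rewrite ?ler01 ?lexx // max_r ?mul1r; lra.
case: ltP => [r_lt|r_ge].
  by split; rewrite ?ler01 ?lexx // max_l ?mul0r; lra.
have p_def : (r + delta) / (2 * delta) * (2 * delta) = r + delta.
  by rewrite divfK // mulf_neq0 // gt_eqF.
move: ((r + delta) / (2 * delta)) p_def => p p_def.
have p_ge0 : 0 <= p by nra.
have p_le1 : p <= 1 by nra.
by split=> //; case: (leP 0 r) => _; nra.
Qed.

Lemma dist_halfspace_le a b x : a != 0 ->
  dist x (halfspace a b) <= Num.max 0 (dot a x - b) / vnorm a.
Proof.
move=> a_neq0; have a_gt0 := vnorm_gt0 a_neq0.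
case: (leP (dot a x - b) 0) => [r_le0|r_gt0].
  have x_in : halfspace a b x by [].
  by rewrite mul0r; have := dist_le x x_in; rewrite subrr vnorm0.
set t := (dot a x - b) / dot a a.
have aa_neq0 : dot a a != 0 by rewrite -vnorm_sqr sqrf_eq0 gt_eqF.
have proj_in : halfspace a b (x - t *: a).
  by rewrite /halfspace /= dotBr dotZr divfK //; lra.
apply: le_trans (dist_le x proj_in) _.
rewrite opprB addrC subrK vnormZ ger0_norm; last by rewrite divr_ge0 ?dotxx_ge0 ?ltW.
by rewrite /t -vnorm_sqr expr2 invfM mulrA mulfVK ?gt_eqF.
Qed.

Lemma vnorm_grad_h_le1 delta a b x : a != 0 -> 0 < delta ->
  vnorm (grad_h delta a b x) <= 1.
Proof.
move=> a_neq0 delta_gt0; have a_gt0 := vnorm_gt0 a_neq0.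
have [p_ge0 p_le1 _] := pdelta'_bounds (dot a x - b) delta_gt0.
rewrite vnormZ ger0_norm; last by rewrite mulr_ge0 // invr_ge0 ltW.
by rewrite mulrAC mulVf ?gt_eqF ?mul1r.
Qed.

Lemma penalty_grad_bound delta a b x y : a != 0 -> 0 < delta -> halfspace a b y ->
  2 * dist x (halfspace a b) - 2 * dot (grad_h delta a b x) (x - y)
    <= delta / (2 * vnorm a).
Proof.
move=> a_neq0 delta_gt0 y_in; have a_gt0 := vnorm_gt0 a_neq0.
have ni_gt0 : 0 < (vnorm a)^-1 by rewrite invr_gt0.
have := dist_halfspace_le b x a_neq0.
have [p_ge0 _ smooth] := pdelta'_bounds (dot a x - b) delta_gt0.
rewrite /grad_h dotZl dotBr invfM; move: y_in; rewrite /halfspace /=.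
move: (pdelta' _ _) p_ge0 smooth => p p_ge0 smooth y_in dist_bound.
have := ler_wpM2l (ltW ni_gt0) smooth.
have : 0 <= (vnorm a)^-1 * p * (dot a x - dot a y - (dot a x - b)).
  by apply: mulr_ge0; [exact: mulr_ge0 (ltW ni_gt0) p_ge0 | lra].
nra.
Qed.

Lemma penalty_grad_bound_alpha_min m (a : 'I_m -> vec) (b : 'I_m -> R) i delta x y :
  (0 < m)%N -> (forall j, a j != 0) -> 0 < delta -> polyhedron a b y ->
  2 * dist x (halfspace (a i) (b i)) - 2 * dot (grad_h delta (a i) (b i) x) (x - y)
    <= delta / (2 * alpha_min a).
Proof.
move=> m_gt0 a_neq0 delta_gt0 y_in; have alpha_gt0 := alpha_min_gt0 m_gt0 a_neq0.
apply: le_trans (penalty_grad_bound x (a_neq0 i) delta_gt0 (y_in i)) _.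
rewrite ler_pM2l // lef_pV2 ?posrE ?pmulr_rgt0 ?vnorm_gt0 //.
by rewrite ler_pM2l // alpha_min_le.
Qed.
End Penalty.

(** * Optimality gap and the main estimate *)

Section OptimalityGap.
Variables (R : realType) (n : nat).
Notation vec := 'rV[R]_n.
Implicit Types (X : set vec) (p u y xs : vec).
Variable f : vec -> R.
Hypothesis f_conv : convex_fun f.

Lemma Xstar_minimal X xs : bounded_level_sets f -> Xstar f X xs ->
  forall y, X y -> f xs <= f y.
Proof.
move=> f_lev [_ ->] y Xy; have [L L_le] := convex_bounded_below f_conv f_lev.
by apply: ge_inf; [exists L => _ [z _ <-] | exists y].
Qed.

Lemma subgradient_lower_bound p u y : subdiff f p u -> f p - vnorm u * vnorm (y - p) <= f y.
Proof.
move=> u_sub; have := u_sub y; have := cauchy_schwarz (- u) (y - p).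
by rewrite dotNl vnormN; lra.
Qed.

(* The directional derivative at a minimizer is nonnegative towards [p], and sublinearity
   transfers this to the direction [y - xs] up to a term controlled by a subgradient. *)
Lemma convex_min_gap_ge X xs p y (B : R) : convex_set X -> X xs -> X p ->
  (forall z, X z -> f xs <= f z) -> (forall v, subdiff f xs v -> vnorm v <= B) ->
  - (B * vnorm (y - p)) <= f y - f xs.
Proof.
move=> X_conv Xxs Xp xs_min subgrad_le.
have dd_y := dir_deriv_le_diff f_conv xs (y - xs); rewrite [xs + _]addrC subrK in dd_y.
have dd_p : 0 <= dir_deriv f xs (p - xs).
  apply: dir_deriv_ge => t t_gt0; set s := Num.min t 1.
  have s_gt0 : 0 < s by rewrite lt_min t_gt0 ltr01.
  have [s_le_t s_le1] : s <= t /\ s <= 1 by rewrite !ge_min !lexx orbT.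
  apply: le_trans (diff_quot_le f_conv _ _ s_gt0 s_le_t).
  apply: divr_ge0 (ltW s_gt0); rewrite subr_ge0; apply: xs_min.
  have -> : xs + s *: (p - xs) = (1 - s) *: xs + s *: p by apply/rowP => j; rewrite !mxE; ring.
  exact: X_conv (ltW s_gt0) s_le1.
have := (dir_deriv_sublinear f_conv xs).1 (y - xs) (p - y).
rewrite [y - xs + _]addrC addrA subrK.
have [v [v_sub v_dd]] := exists_subgradient_dir f_conv xs (p - y).
have := cauchy_schwarz v (p - y); rewrite vnorm_distC.
have := ler_wpM2r (vnorm_ge0 (y - p)) (subgrad_le v v_sub); lra.
Qed.

Section ProjectedGap.
Variables (X : set vec) (M1 M2 B : R).
Hypothesis X_conv : convex_set X.
Hypothesis X_nearest : forall x, exists2 p, X p & vnorm (x - p) <= dist x X.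
Hypothesis M1_ge0 : 0 <= M1.
Hypothesis subgrad_growth : forall y v, subdiff f y v -> vnorm v <= M1 * vnorm y + M2.

Lemma subgrad_growth_le z xs v (d : R) : vnorm (z - xs) <= d -> vnorm xs <= B ->
  subdiff f z v -> vnorm v <= M1 * (d + B) + M2.
Proof.
move=> z_near xs_le /subgrad_growth /le_trans -> //; rewrite lerD2r ler_wpM2l //.
by have := vnorm_le_distD z xs; lra.
Qed.

Lemma opt_gap_ge xs y (rho : R) : X xs -> (forall z, X z -> f xs <= f z) ->
  vnorm xs <= B -> (forall v, subdiff f xs v -> vnorm v <= B) -> 0 <= rho -> rho <= 1 ->
  (1 - rho) * - (B * dist y X)
    + rho * (f (proj X y) - (M1 * (vnorm (y - xs) + B) + M2) * dist y X - f xs)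
  <= f y - f xs.
Proof.
move=> Xxs xs_min xs_le xs_subgrad_le rho_ge0 rho_le1.
have p_dist : vnorm (y - proj X y) = dist y X := proj_dist X_nearest y.
have gap_xs : - (B * dist y X) <= f y - f xs.
  have := convex_min_gap_ge y X_conv Xxs (proj_mem X_nearest y) xs_min xs_subgrad_le.
  by rewrite p_dist.
have gap_p : f (proj X y) - (M1 * (vnorm (y - xs) + B) + M2) * dist y X <= f y.
  have [u u_sub] := exists_subgradient f_conv (proj X y).
  have u_le := subgrad_growth_le (proj_nonexpansive X_conv X_nearest y Xxs) xs_le u_sub.
  have := subgradient_lower_bound y u_sub; rewrite p_dist.
  have := ler_wpM2r (dist_ge0 y (ex_intro _ xs Xxs)) u_le; lra.
have rho'_ge0 : 0 <= 1 - rho by lra.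
have := ler_wpM2l rho_ge0 gap_p; have := ler_wpM2l rho'_ge0 gap_xs; lra.
Qed.
End ProjectedGap.

End OptimalityGap.

Lemma sqr_add4_le (R : realFieldType) (p q r s : R) :
  (p + q + r + s) ^+ 2 <= 4 * (p ^+ 2 + q ^+ 2 + r ^+ 2 + s ^+ 2).
Proof.
have := sqr_ge0 (p - q); have := sqr_ge0 (p - r); have := sqr_ge0 (p - s).
have := sqr_ge0 (q - r); have := sqr_ge0 (q - s); have := sqr_ge0 (r - s); nra.
Qed.

Lemma vnorm_addZ_sqr_le (R : realType) (n : nat) (u w : 'rV[R]_n) (p q r t : R) :
  0 <= t -> vnorm w <= 1 -> vnorm u <= p + q + r ->
  vnorm (u + t *: w) ^+ 2 <= 4 * (p ^+ 2 + q ^+ 2 + r ^+ 2 + t ^+ 2).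
Proof.
move=> t_ge0 w_le u_le; apply: le_trans (sqr_add4_le p q r t).
have uw_le : vnorm (u + t *: w) <= p + q + r + t.
  have := ler_vnormD u (t *: w); rewrite vnormZ ger0_norm //.
  by have := ler_wpM2l t_ge0 w_le; lra.
by have := vnorm_ge0 (u + t *: w); nra.
Qed.

Unset Implicit Arguments.

Theorem lemma9 (R : realType) (n m : nat) (a : 'I_m -> 'rV[R]_n) (b : 'I_m -> R)
  (f : 'rV[R]_n -> R) (M1 M2 B rho : R)
  (gamma delta s : nat -> R) (x g : nat -> 'rV[R]_n) (idx : nat -> 'I_m) :
  (0 < m)%N ->
  (forall i, a i != 0) ->
  (exists x0, polyhedron a b x0) ->
  convex_fun f -> bounded_level_sets f ->
  0 < M1 -> 0 < M2 ->
  (forall y v, subdiff f y v -> vnorm v <= M1 * vnorm y + M2) ->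
  (forall k, 0 < gamma k) -> (forall k, 0 < delta k) -> (forall k, 0 < s k) ->
  0 < B ->
  (forall xs, Xstar f (polyhedron a b) xs ->
     vnorm xs <= B /\ forall v, subdiff f xs v -> vnorm v <= B) ->
  0 <= rho -> rho <= 1 ->
  (forall k, (1 <= k)%N -> subdiff f (x k) (g k)) ->
  (forall k, (1 <= k)%N ->
     x k.+1 = x k - s k *: (g k + gamma k *: grad_h (delta k) (a (idx k)) (b (idx k)) (x k))) ->
  forall xs, Xstar f (polyhedron a b) xs -> forall k, (1 <= k)%N ->
  let X := polyhedron a b in
  let dk := dist (x k) X in
  vnorm (x k.+1 - xs) ^+ 2 <=
    (1 + 4 * s k ^+ 2 * M1 ^+ 2) * vnorm (x k - xs) ^+ 2
    + 2 * s k * ((1 - rho) * B + rho * (M1 * B + M2)) * dk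
    + 2 * s k * rho * (fstar f X - f (proj X (x k)))
    + 2 * s k * rho * M1 * vnorm (x k - xs) * dk
    + s k * gamma k * delta k / (2 * alpha_min a)
    - 2 * s k * gamma k * dist (x k) (halfspace (a (idx k)) (b (idx k)))
    + 4 * s k ^+ 2 * (M1 ^+ 2 * B ^+ 2 + M2 ^+ 2 + gamma k ^+ 2).
Proof.
move=> m_gt0 a_neq0 Xne f_conv f_lev M1_gt0 _ subgrad_growth gamma_gt0 delta_gt0 s_gt0 _
  Xstar_le rho_ge0 rho_le1 g_sub x_step xs xs_opt k k_ge1; cbv zeta.
set X := polyhedron a b; set i := idx k; set h := grad_h (delta k) (a i) (b i) (x k).
have [[xsX fxs] [xs_le xs_subgrad_le]] := (xs_opt, Xstar_le xs xs_opt).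
have X_nearest y : exists2 p, X p & vnorm (y - p) <= dist y X.
  exact: polyhedron_nearest_point.
have gap := opt_gap_ge f_conv (@polyhedron_convex _ _ _ a b) X_nearest (ltW M1_gt0)
  subgrad_growth (x k) xsX (Xstar_minimal f_conv f_lev xs_opt) xs_le xs_subgrad_le
  rho_ge0 rho_le1.
have g_gap : f (x k) - f xs <= dot (g k) (x k - xs).
  by have := g_sub k k_ge1 xs; rewrite -opprB dotNr; lra.
have pen := penalty_grad_bound_alpha_min i (x k) m_gt0 a_neq0 (delta_gt0 k) xsX.
have g_le := subgrad_growth_le (ltW M1_gt0) subgrad_growth (lexx _) xs_le (g_sub k k_ge1).
rewrite mulrDr in g_le.
have G_le := vnorm_addZ_sqr_le (ltW (gamma_gt0 k))
  (vnorm_grad_h_le1 (b i) (x k) (a_neq0 i) (delta_gt0 k)) g_le.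
have -> : fstar f X = f xs by rewrite fxs.
rewrite x_step // -/i -/h addrAC vnorm_sqr_subZ dotDl dotZl.
have s2_ge0 : 0 <= 2 * s k by rewrite mulr_ge0 // ltW.
have := ler_wpM2l s2_ge0 (le_trans gap g_gap).
have := ler_wpM2l (mulr_ge0 (ltW (s_gt0 k)) (ltW (gamma_gt0 k))) pen.
have := ler_wpM2l (sqr_ge0 (s k)) G_le.
rewrite !exprMn; lra.
Qed.
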